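(* Let $u \in W$ be rational with $u \neq w_0$. Then there exists a simple root $\alpha$ such that $u^{-1}(\alpha) > 0$ and $u(\alpha) < 0$.
   Context: $W$ is the Weyl group of a root system $\Pi$ with simple roots $\Delta$, positive roots $\Pi_+$, longest element $w_0$. $\gamma>0$ (resp. $<0$) means $\gamma$ is a positive (resp. negative) root. $\alpha\le\beta$ iff $\beta-\alpha$ is a nonnegative integer combination of simple roots. For $A\subseteq\Pi_+$, $\mathrm{Adj}(A) = \{\alpha\in\Pi_+ : \exists\beta\in A,\ \alpha\le\beta\}$. For $u\in W$: $\nu^0(u) = u(\Pi_+)\cap\Pi_+$, $\nu^k(u) = u(\mathrm{Adj}\,\nu^{k-1}(u))\cap\Pi_+$, eventually constant with value $\nu(u)$; $u$ is rational iff $\nu(u) = \emptyset$. *)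

From HB Require Import structures.
From mathcomp Require Import all_boot all_order all_algebra.
Set Implicit Arguments. Unset Strict Implicit. Unset Printing Implicit Defensive.
Import Order.TTheory GRing.Theory Num.Theory.
Local Open Scope ring_scope.

Section RootSystems.
Variables (R : realFieldType) (n : nat).
Local Notation V := 'cV[R]_n.

Definition dot (u v : V) : R := (u^T *m v) 0 0.

(* orthogonal reflection s_a : v |-> v - 2 (v,a)/(a,a) a, as a matrix *)
Definition refl (a : V) : 'M[R]_n := 1%:M - (2 / dot a a) *: (a *m a^T).

Definition root_system (Pi : seq V) : Prop :=
  [/\ uniq Pi /\ (0 : V) \notin Pi,
      (<<Pi>>%VS = fullv),
      (forall a b, a \in Pi -> b \in Pi -> refl a *m b \in Pi),
      (forall a b, a \in Pi -> b \in Pi ->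
         exists z : int, 2 * dot b a / dot a a = z%:~R) &
      (forall a (c : R), a \in Pi -> c *: a \in Pi -> c = 1 \/ c = -1)].

Definition nncomb (Delta : seq V) (v : V) : Prop :=
  exists c : 'I_(size Delta) -> nat,
    v = \sum_(i < size Delta) (c i)%:R *: Delta`_i.

Definition simple_system (Pi Delta : seq V) : Prop :=
  [/\ uniq Delta, {subset Delta <= Pi}, free Delta &
      (forall b, b \in Pi -> nncomb Delta b \/ nncomb Delta (- b))].

Definition pos_root (Pi Delta : seq V) (g : V) : Prop :=
  g \in Pi /\ nncomb Delta g.
Definition neg_root (Pi Delta : seq V) (g : V) : Prop :=
  g \in Pi /\ nncomb Delta (- g).

Definition rle (Delta : seq V) (a b : V) : Prop := nncomb Delta (b - a).

(* Weyl group: generated by the reflections s_a, a in Pi; u acts by v |-> u *m v *)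
Inductive in_weyl (Pi : seq V) : 'M[R]_n -> Prop :=
| weyl1 : in_weyl Pi 1%:M
| weylS a w : a \in Pi -> in_weyl Pi w -> in_weyl Pi (refl a *m w).

Definition simple_word (Delta : seq V) (w : 'M[R]_n) (k : nat) : Prop :=
  exists s : seq V, [/\ size s = k, {subset s <= Delta} &
    w = foldr (fun a m => refl a *m m) 1%:M s].

Definition longest (Pi Delta : seq V) (w0 : 'M[R]_n) : Prop :=
  in_weyl Pi w0 /\
  forall w, in_weyl Pi w -> forall k, simple_word Delta w0 k ->
    exists2 k', (k' <= k)%N & simple_word Delta w k'.

Definition Adj (Pi Delta : seq V) (A : V -> Prop) : V -> Prop :=
  fun a => pos_root Pi Delta a /\ exists2 b, A b & rle Delta a b.

Fixpoint nu (Pi Delta : seq V) (u : 'M[R]_n) (k : nat) : V -> Prop :=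
  match k with
  | 0 => fun g => pos_root Pi Delta g /\ exists2 a, pos_root Pi Delta a & g = u *m a
  | k'.+1 => fun g => pos_root Pi Delta g /\
       exists2 a, Adj Pi Delta (nu Pi Delta u k') a & g = u *m a
  end.

(* u is rational iff the eventual value nu(u) of nu^k(u) is empty *)
Definition rational (Pi Delta : seq V) (u : 'M[R]_n) : Prop :=
  exists K, forall k, (K <= k)%N -> forall g, ~ nu Pi Delta u k g.

End RootSystems.

From HB Require Import structures.
From mathcomp Require Import all_boot all_order all_algebra.
From Stdlib Require Import Classical.
Set Implicit Arguments. Unset Strict Implicit. Unset Printing Implicit Defensive.
Import Order.TTheory GRing.Theory Num.Theory.
Local Open Scope ring_scope.

(* If u sends every positive root to a negative one, then u = w0: w0 sends
   every simple root to a negative root (otherwise, by the deletion condition,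
   w0 s_alpha would be longer than w0), so w0^-1 u sends every simple root to a
   positive root and is therefore the identity.  Hence nu^0(u) is nonempty for
   u <> w0, and since u is rational there is a last k with nu^k(u) nonempty.
   Pick gamma = u(beta) in nu^k(u) and expand gamma over the simple roots.
   Some simple root alpha in the support of gamma has u^-1(alpha) > 0, since
   otherwise beta = u^-1(gamma) would be negative; and u(alpha) < 0, since
   otherwise alpha <= gamma would put u(alpha) in nu^(k+1)(u). *)

Section Reflections.
Variables (R : realFieldType) (n : nat).
Local Notation V := 'cV[R]_n.
Implicit Types (a b : V) (x y : 'M[R]_n) (s : seq V).

Lemma dotE a b : dot a b = \sum_i a i 0 * b i 0.
Proof. by rewrite /dot !mxE; apply: eq_bigr => i _; rewrite mxE. Qed.

Lemma dotC a b : dot a b = dot b a.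
Proof. by rewrite !dotE; apply: eq_bigr => i _; rewrite mulrC. Qed.

Lemma dotxx_gt0 a : a != 0 -> 0 < dot a a.
Proof.
move=> a0; rewrite dotE lt_def sumr_ge0 ?andbT => [|i _]; last by rewrite -expr2 sqr_ge0.
have sq_ge0 (i : 'I_n) : true -> 0 <= a i 0 * a i 0 by rewrite -expr2 sqr_ge0.
apply: contra a0 => /eqP /(psumr_eq0P sq_ge0) a2_0; apply/eqP/matrixP => i j.
by rewrite (ord1 j) mxE; have /eqP := a2_0 i isT; rewrite mulf_eq0 orbb => /eqP.
Qed.

Lemma dot_lc (D : seq V) (k : 'I_(size D) -> R) a :
  dot a (\sum_(i < size D) k i *: D`_i) = \sum_(i < size D) k i * dot a D`_i.
Proof.
rewrite /dot mulmx_sumr summxE; apply: eq_bigr => i _.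
by rewrite -scalemxAr mxE.
Qed.

Lemma trmx_mul_dot a b : a^T *m b = (dot a b)%:M.
Proof. by apply/matrixP => i j; rewrite !ord1 [RHS]mxE /dot mulr1n. Qed.

Lemma mul_refl a b : refl a *m b = b - (2 * dot a b / dot a a) *: a.
Proof.
rewrite /refl mulmxBl mul1mx -scalemxAl -mulmxA trmx_mul_dot.
by rewrite mul_mx_scalar scalerA mulrAC.
Qed.

Lemma trmx_refl a : (refl a)^T = refl a.
Proof. by rewrite /refl linearB /= linearZ /= trmx_mul trmxK trmx1. Qed.

Lemma mul_refl_self a : a != 0 -> refl a *m a = - a.
Proof.
move=> a0; rewrite mul_refl mulfK ?gt_eqF ?dotxx_gt0 //.
by rewrite scaler_nat mulr2n opprD addrA subrr sub0r.
Qed.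

Lemma refl_refl a : a != 0 -> refl a *m refl a = 1%:M.
Proof.
move=> a0; have aa0 : dot a a != 0 by rewrite gt_eqF ?dotxx_gt0.
have proj2 : (a *m a^T) *m (a *m a^T) = dot a a *: (a *m a^T).
  by rewrite mulmxA -(mulmxA a) trmx_mul_dot mul_mx_scalar -scalemxAl.
rewrite /refl mulmxBl mul1mx mulmxBr mulmx1 -scalemxAl -scalemxAr proj2 !scalerA.
set c := 2 / dot a a.
rewrite (_ : c * c * dot a a = c + c) ?scalerDl ?opprB ?addrK ?subrK //.
by rewrite -mulrA /c mulfVK // mulr_natr mulr2n.
Qed.

Lemma reflN a : refl (- a) = refl a.
Proof. by rewrite /refl /dot !linearN /= !mulNmx !(opprK, scalerN). Qed.

Definition orthomx y := y^T *m y = 1%:M.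

Lemma orthomx_mul_tr y : orthomx y -> y *m y^T = 1%:M.
Proof. exact: mulmx1C. Qed.

Lemma orthomx_invmx y : orthomx y -> invmx y = y^T.
Proof.
move=> oy; have [_ yu] := mulmx1_unit oy.
by rewrite -[invmx y]mulmx1 -(orthomx_mul_tr oy) mulmxA mulVmx // mul1mx.
Qed.

Lemma orthomx_refl a : a != 0 -> orthomx (refl a).
Proof. by move=> a0; rewrite /orthomx trmx_refl refl_refl. Qed.

Lemma orthomxM x y : orthomx x -> orthomx y -> orthomx (x *m y).
Proof.
by move=> ox oy; rewrite /orthomx trmx_mul mulmxA -(mulmxA y^T) ox mulmx1 oy.
Qed.

Lemma dot_orthomx y a b : orthomx y -> dot (y *m a) (y *m b) = dot a b.
Proof. by move=> oy; rewrite /dot trmx_mul mulmxA -(mulmxA a^T) oy mulmx1. Qed.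

Lemma refl_conj y a : orthomx y -> y *m refl a *m y^T = refl (y *m a).
Proof.
move=> oy; rewrite /refl dot_orthomx // mulmxBr mulmx1 mulmxBl orthomx_mul_tr //.
by rewrite -scalemxAr -scalemxAl !mulmxA trmx_mul mulmxA.
Qed.

Definition wprod s : 'M[R]_n := foldr (fun a m => refl a *m m) 1%:M s.

Lemma wprod_cons a s : wprod (a :: s) = refl a *m wprod s.
Proof. by []. Qed.

Lemma wprod_cat s t : wprod (s ++ t) = wprod s *m wprod t.
Proof.
elim: s => [|a s IH]; first by rewrite mul1mx.
by rewrite cat_cons !wprod_cons IH mulmxA.
Qed.

Lemma wprod_rcons s a : wprod (rcons s a) = wprod s *m refl a.
Proof. by rewrite -cats1 wprod_cat /= mulmx1. Qed.

Lemma trmx_wprod s : (wprod s)^T = wprod (rev s).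
Proof.
elim: s => [|a s IH]; first by rewrite trmx1.
by rewrite wprod_cons trmx_mul IH trmx_refl rev_cons wprod_rcons.
Qed.

End Reflections.

Section Combinations.
Variables (R : realFieldType) (n : nat) (D : seq 'cV[R]_n).
Local Notation lc c := (\sum_(i < size D) c i *: D`_i).

Lemma mem_ord_nth t : t \in D -> exists j : 'I_(size D), t = D`_j.
Proof.
move=> tD; have idx : (index t D < size D)%N by rewrite index_mem.
by exists (Ordinal idx); rewrite /= nth_index.
Qed.

Lemma free_lc_inj (c d : 'I_(size D) -> R) : free D -> lc c = lc d -> c =1 d.
Proof.
move=> fD E i; apply/eqP; rewrite -subr_eq0; apply/eqP.
move/freeP: (fD : free (in_tuple D)) => /(_ (fun i => c i - d i)) -> //.
under eq_bigr do rewrite scalerBl.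
by rewrite sumrB E subrr.
Qed.

Lemma nncomb0 : nncomb D 0.
Proof. by exists (fun _ => 0%N); rewrite big1 // => i _; rewrite scale0r. Qed.

Lemma nncombD x y : nncomb D x -> nncomb D y -> nncomb D (x + y).
Proof.
move=> [c ->] [d ->]; exists (fun i => c i + d i)%N; rewrite -big_split /=.
by apply: eq_bigr => i _; rewrite natrD scalerDl.
Qed.

Lemma nncombZ (k : nat) x : nncomb D x -> nncomb D (k%:R *: x).
Proof.
move=> [c ->]; exists (fun i => k * c i)%N; rewrite scaler_sumr.
by apply: eq_bigr => i _; rewrite natrM scalerA.
Qed.

Lemma nncomb_sum m (c : 'I_m -> nat) f :
  (forall i, nncomb D (f i)) -> nncomb D (\sum_(i < m) (c i)%:R *: f i).
Proof.
move=> Df; apply: (big_ind (nncomb D)); [exact: nncomb0|exact: nncombD|].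
by move=> i _; apply: nncombZ.
Qed.

Lemma nncomb_nth (j : 'I_(size D)) : nncomb D D`_j.
Proof.
exists (fun i => (i == j)%N); rewrite (bigD1 j) //= eqxx scale1r big1 ?addr0 //.
by move=> i /negbTE ->; rewrite scale0r.
Qed.

Lemma nncomb_anti b : free D -> nncomb D b -> nncomb D (- b) -> b = 0.
Proof.
move=> fD [c Ec] [d Ed].
have : lc (fun i => (c i + d i)%:R) = lc (fun=> 0).
  under eq_bigr do rewrite natrD scalerDl.
  by rewrite big_split /= -Ec -Ed subrr big1 // => i _; rewrite scale0r.
move/(free_lc_inj fD) => cd0; rewrite Ec big1 // => i _.
by move/eqP: (cd0 i); rewrite pnatr_eq0 addn_eq0 => /andP[/eqP -> _]; rewrite scale0r.
Qed.

Lemma nncomb_sub_nth (c : 'I_(size D) -> nat) i :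
  (0 < c i)%N -> nncomb D (lc (fun j => (c j)%:R) - D`_i).
Proof.
move=> ci; exists (fun j => c j - (j == i))%N.
rewrite (bigD1 i) //= [in RHS](bigD1 i) //= eqxx subn1.
under [in RHS]eq_bigr => j /negbTE -> do rewrite subn0.
by rewrite -{1}(prednK ci) -natr1 scalerDl scale1r addrAC addrK.
Qed.

Lemma lc_pos_coef_dot (c : 'I_(size D) -> nat) a :
  a != 0 -> a = lc (fun i => (c i)%:R) ->
  exists2 i, (0 < c i)%N & 0 < dot a D`_i.
Proof.
move=> a0 Ea; have : [exists i, 0 < (c i)%:R * dot a D`_i].
  apply: contraT => /existsPn /= nonpos.
  suff : dot a a <= 0 by rewrite leNgt dotxx_gt0.
  by rewrite {2}Ea dot_lc; apply: sumr_le0 => j _; rewrite leNgt nonpos.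
case/existsP => i /= cdi.
have ci : (0 < c i)%N.
  by rewrite lt0n; apply: contraTneq cdi => ->; rewrite mul0r ltxx.
by exists i; move: cdi; rewrite // pmulr_rgt0 ?ltr0n.
Qed.

Lemma free_lc_add_nth_size (c d : 'I_(size D) -> nat) (i : 'I_(size D)) (m : nat) :
  free D -> (0 < m)%N ->
  lc (fun j => (c j)%:R) = lc (fun j => (d j)%:R) + m%:R *: D`_i ->
  (\sum_j d j < \sum_j c j)%N.
Proof.
move=> fD m0 E.
have cE j : c j = (d j + (j == i) * m)%N.
  apply/eqP; rewrite -(eqr_nat R) natrD natrM; apply/eqP; move: j.
  apply: (free_lc_inj (c := fun j => (c j)%:R)
           (d := fun j => (d j)%:R + (j == i)%:R * m%:R) fD).
  rewrite E; under [in RHS]eq_bigr do rewrite scalerDl.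
  rewrite big_split /=; congr (_ + _).
  rewrite (bigD1 i) //= eqxx mul1r big1 ?addr0 // => j /negbTE ->.
  by rewrite mul0r scale0r.
rewrite (eq_bigr _ (fun j _ => cE j)) big_split /= -addn1 leq_add2l.
by rewrite (bigD1 i) //= eqxx mul1n (leq_trans m0) ?leq_addr.
Qed.

End Combinations.

Section RootSystem.
Variables (R : realFieldType) (n : nat) (Pi Delta : seq 'cV[R]_n).
Hypotheses (hPi : root_system Pi) (hD : simple_system Pi Delta).
Local Notation pos := (pos_root Pi Delta).

Lemma root_neq0 a : a \in Pi -> a != 0.
Proof. by have [[_ Pi0] _ _ _ _] := hPi; move=> aP; apply: contraNneq Pi0 => <-. Qed.

Lemma refl_root a b : a \in Pi -> b \in Pi -> refl a *m b \in Pi.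
Proof. by have [_ _ PiR _ _] := hPi; apply: PiR. Qed.

Lemma rootN a : a \in Pi -> - a \in Pi.
Proof. by move=> aP; rewrite -mul_refl_self ?root_neq0 ?refl_root. Qed.

Lemma free_simple : free Delta.
Proof. by have [] := hD. Qed.

Lemma root_sign b : b \in Pi -> nncomb Delta b \/ nncomb Delta (- b).
Proof. by have [_ _ _] := hD; apply. Qed.

Lemma root_not_pos_neg b : b \in Pi -> nncomb Delta b -> ~ nncomb Delta (- b).
Proof.
move=> bP bpos bneg; have := nncomb_anti free_simple bpos bneg.
by apply/eqP; apply: root_neq0.
Qed.

Lemma simple_root (j : 'I_(size Delta)) : Delta`_j \in Pi.
Proof. by have [_ sub _ _] := hD; apply/sub/mem_nth. Qed.

Lemma simple_pos (j : 'I_(size Delta)) : pos Delta`_j.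
Proof. by split; [apply: simple_root | apply: nncomb_nth]. Qed.

Lemma weyl_root w b : in_weyl Pi w -> b \in Pi -> w *m b \in Pi.
Proof.
move=> wW; elim: wW b => [|a {}w aP _ IH] b bP; first by rewrite mul1mx.
by rewrite -mulmxA refl_root ?IH.
Qed.

Lemma weyl_trmx_root w b : in_weyl Pi w -> b \in Pi -> w^T *m b \in Pi.
Proof.
move=> wW; elim: wW b => [|a {}w aP _ IH] b bP; first by rewrite trmx1 mul1mx.
by rewrite trmx_mul trmx_refl -mulmxA IH ?refl_root.
Qed.

Lemma weyl_orthomx w : in_weyl Pi w -> orthomx w.
Proof.
elim=> [|a {}w aP _ IH]; first by rewrite /orthomx trmx1 mulmx1.
by apply: orthomxM => //; apply/orthomx_refl/root_neq0.
Qed.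

Lemma weylM w w' : in_weyl Pi w -> in_weyl Pi w' -> in_weyl Pi (w *m w').
Proof.
elim=> [|a {}w aP _ IH] w'W; first by rewrite mul1mx.
by rewrite -mulmxA; apply: weylS; last apply: IH.
Qed.

Lemma weyl_wprod s : {subset s <= Pi} -> in_weyl Pi (wprod s).
Proof.
elim: s => [|a s IH] sPi; first exact: weyl1.
apply: weylS; first by apply: sPi; rewrite mem_head.
by apply: IH => x xs; apply: sPi; rewrite inE xs orbT.
Qed.

Local Notation lc c := (\sum_(i < size Delta) (c i)%:R *: Delta`_i).

Lemma refl_simple_pos (j : 'I_(size Delta)) a :
  pos a -> a != Delta`_j -> pos (refl Delta`_j *m a).
Proof.
move=> [aP [c Ea]] a_neq; have raP : refl Delta`_j *m a \in Pi.
  by rewrite refl_root ?simple_root.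
split => //; case: (root_sign raP) => // -[d]; rewrite mul_refl opprB.
set k := 2 * _ / _ => Ed; exfalso.
have cd0 i : i != j -> c i = 0%N.
  move=> ij.
  have : (c i)%:R + (d i)%:R = (if i == j then k else 0) :> R.
    apply: (free_lc_inj (c := fun i => (c i)%:R + (d i)%:R)
                        (d := fun i => if i == j then k else 0) free_simple).
    under eq_bigr do rewrite scalerDl.
    rewrite big_split /= -Ea -Ed addrC subrK (bigD1 j) //= eqxx big1 ?addr0 //.
    by move=> i' /negbTE ->; rewrite scale0r.
  by rewrite (negbTE ij) -natrD => /eqP; rewrite pnatr_eq0 addn_eq0 => /andP[/eqP].
have Ea' : a = (c j)%:R *: Delta`_j.
  by rewrite Ea (bigD1 j) //= big1 ?addr0 // => i /cd0 ->; rewrite scale0r.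
have [_ _ _ _ reduced] := hPi.
have cjP : (c j)%:R *: Delta`_j \in Pi by rewrite -Ea'.
case: (reduced _ _ (simple_root j) cjP) => [cj1|].
  by move: a_neq; rewrite Ea' cj1 scale1r eqxx.
by move/eqP; rewrite -subr_eq0 opprK -(natrD _ _ 1) pnatr_eq0 addn1.
Qed.

Lemma mul_refl_dot_gt0 a b : a \in Pi -> b \in Pi -> 0 < dot a b ->
  exists2 m : nat, (0 < m)%N & refl b *m a = a - m%:R *: b.
Proof.
move=> aP bP ab_gt0; have [_ _ _ cryst _] := hPi.
have [z Ez] := cryst _ _ bP aP.
have : 0 < z%:~R :> R.
  by rewrite -Ez divr_gt0 ?mulr_gt0 ?dotxx_gt0 ?root_neq0.
rewrite mul_refl dotC Ez; case: z {Ez} => m; rewrite ltr0z // => m0.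
by exists m.
Qed.

(* Induction on the height of a: when (a, alpha_i) > 0, s_i a = a - m alpha_i is
   a positive root of smaller height, and s_a = s_i s_(s_i a) s_i. *)
Lemma refl_wprod_pos (c : 'I_(size Delta) -> nat) a : a \in Pi -> a = lc c ->
  exists2 s, {subset s <= Delta} & wprod s = refl a.
Proof.
have [N] := ubnP (\sum_i c i); elim: N c a => // N IH c a szc aP Ea.
have [i ci dai] := lc_pos_coef_dot (root_neq0 aP) Ea.
have iD : Delta`_i \in Delta by apply: mem_nth.
have [->|a_neq] := eqVneq a Delta`_i.
  by exists [:: Delta`_i]; [move=> x; rewrite inE => /eqP -> | rewrite /= mulmx1].
have [bP [d Ed]] := refl_simple_pos (conj aP (ex_intro _ c Ea)) a_neq.
have [m m0 Eb] := mul_refl_dot_gt0 aP (simple_root i) dai.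
have szd : (\sum_i d i < \sum_i c i)%N.
  by apply: (free_lc_add_nth_size (i := i) free_simple m0); rewrite -Ea -Ed Eb subrK.
have [s sD Es] := IH d _ (leq_trans szd szc) bP Ed.
exists (Delta`_i :: rcons s Delta`_i).
  by move=> x; rewrite inE mem_rcons inE orbA orbb => /orP[/eqP -> | /sD].
have oi : orthomx (refl Delta`_i) by apply/orthomx_refl/root_neq0/simple_root.
rewrite wprod_cons wprod_rcons Es -(refl_conj _ oi) trmx_refl !mulmxA.
by rewrite refl_refl ?mul1mx -?mulmxA ?refl_refl ?mulmx1 // root_neq0 ?simple_root.
Qed.

Lemma refl_wprod a : a \in Pi -> exists2 s, {subset s <= Delta} & wprod s = refl a.
Proof.
move=> aP; case: (root_sign aP) => -[c Ec]; first exact: refl_wprod_pos Ec.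
by rewrite -reflN; apply: refl_wprod_pos Ec; apply: rootN.
Qed.

Lemma weyl_wprod_simple w : in_weyl Pi w ->
  exists2 s, {subset s <= Delta} & wprod s = w.
Proof.
elim=> [|a {}w aP _ [s sD <-]]; first by exists [::].
have [t tD <-] := refl_wprod aP.
by exists (t ++ s); [move=> x; rewrite mem_cat => /orP[/tD | /sD] | rewrite wprod_cat].
Qed.

Lemma deletion s (j : 'I_(size Delta)) :
  {subset s <= Delta} -> nncomb Delta (- (wprod s *m Delta`_j)) ->
  exists s', [/\ (size s').+1 = size s, {subset s' <= Delta} &
                 wprod s' = wprod s *m refl Delta`_j].
Proof.
elim: s => [|t s IH] sD neg.
  by have [] := root_not_pos_neg (simple_root j) (nncomb_nth j); rewrite -[Delta`_j]mul1mx.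
have tD : t \in Delta by apply: sD; rewrite mem_head.
have {}sD : {subset s <= Delta} by move=> x xs; apply: sD; rewrite inE xs orbT.
have sPi : {subset s <= Pi} by have [_ DPi _ _] := hD; move=> x /sD /DPi.
set y := wprod s; have yW : in_weyl Pi y by apply: weyl_wprod.
have yjP : y *m Delta`_j \in Pi by rewrite weyl_root ?simple_root.
move: neg; rewrite wprod_cons -mulmxA => neg.
case: (root_sign yjP) => [ypos | yneg]; last first.
  have [s' [sz s'D Es']] := IH sD yneg.
  exists (t :: s'); split; first by rewrite /= sz.
    by move=> x; rewrite inE => /orP[/eqP -> | /s'D].
  by rewrite wprod_cons Es' mulmxA.
(* y alpha_j > 0 but s_t y alpha_j < 0 forces y alpha_j = t, so s_t y = y s_j. *)
have [i ti] := mem_ord_nth tD.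
have yj_t : y *m Delta`_j = t.
  apply/eqP/negPn/negP; rewrite ti => yj_neq.
  have [rP rpos] := refl_simple_pos (conj yjP ypos) yj_neq.
  by apply: (root_not_pos_neg rP rpos); rewrite -ti.
exists s; split => //.
have oy : orthomx y by apply: weyl_orthomx.
rewrite -yj_t -(refl_conj _ oy) -!mulmxA (mulmxA y^T) oy mul1mx.
by rewrite refl_refl ?mulmx1 ?root_neq0 ?simple_root.
Qed.

Lemma wprod_simple_eq1 s : {subset s <= Delta} ->
  (forall j : 'I_(size Delta), nncomb Delta (wprod s *m Delta`_j)) -> wprod s = 1%:M.
Proof.
have [N] := ubnP (size s); elim: N s => // N IH s; case/lastP: s => // s t.
rewrite size_rcons ltnS => szs stD pos_img.
have sD : {subset s <= Delta} by move=> x xs; apply: stD; rewrite mem_rcons inE xs orbT.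
have [j tj] : exists j : 'I_(size Delta), t = Delta`_j.
  by apply/mem_ord_nth/stD; rewrite mem_rcons mem_head.
have neg : nncomb Delta (- (wprod s *m Delta`_j)).
  move: (pos_img j); rewrite wprod_rcons -mulmxA -tj mul_refl_self ?mulmxN //.
  by rewrite tj root_neq0 ?simple_root.
have [s' [sz s'D Es']] := deletion sD neg.
rewrite wprod_rcons tj -Es'; apply: IH => // [|i]; first by apply: ltn_trans szs; rewrite -sz.
by rewrite Es' -tj -wprod_rcons.
Qed.

Section Longest.
Variable w0 : 'M[R]_n.
Hypothesis w0L : longest Pi Delta w0.

Lemma longest_simple_neg (j : 'I_(size Delta)) : nncomb Delta (- (w0 *m Delta`_j)).
Proof.
have [w0W w0_max] := w0L.
have w0jP : w0 *m Delta`_j \in Pi by rewrite weyl_root ?simple_root.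
case: (root_sign w0jP) => // w0j_pos; exfalso.
have [s0 s0D Es0] := weyl_wprod_simple w0W.
suff no_word k : ~ simple_word Delta w0 k by apply: (no_word (size s0)); exists s0.
(* From a word of length k for w0, maximality gives a word of length <= k for
   x = w0 s_j; as x alpha_j < 0, deletion turns it into a shorter word for w0. *)
elim/ltn_ind: k => k IH [t [szt tD Et]].
set x := w0 *m refl Delta`_j.
have xW : in_weyl Pi x.
  by apply: weylM => //; rewrite -[refl _]mulmx1; apply/weylS/weyl1/simple_root.
have [k' le_k'k [t' [szt' t'D Et']]] := w0_max x xW k (ex_intro _ t (And3 szt tD Et)).
have neg : nncomb Delta (- (wprod t' *m Delta`_j)).
  by rewrite /wprod -Et' /x -mulmxA mul_refl_self ?root_neq0 ?simple_root // mulmxN opprK.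
have [s' [sz' s'D Es']] := deletion t'D neg.
apply: (IH (size s')); first by rewrite -ltnS sz' szt' ltnS.
exists s'; split => //; rewrite -/(wprod s') Es' /wprod -Et' /x -mulmxA.
by rewrite refl_refl ?mulmx1 ?root_neq0 ?simple_root.
Qed.

Lemma longest_trmx_neg b : pos b -> nncomb Delta (- (w0^T *m b)).
Proof.
move=> [bP bpos]; have ow0 := weyl_orthomx w0L.1.
have tbP : w0^T *m b \in Pi by apply: weyl_trmx_root w0L.1 bP.
case: (root_sign tbP) => // -[c Ec]; exfalso.
apply: (root_not_pos_neg bP bpos).
rewrite -[b]mul1mx -(orthomx_mul_tr ow0) -mulmxA Ec mulmx_sumr -sumrN.
under eq_bigr do rewrite -scalemxAr -scalerN.
by apply: nncomb_sum => i; apply: longest_simple_neg.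
Qed.

Lemma neg_eq_longest u : in_weyl Pi u ->
  (forall a, pos a -> nncomb Delta (- (u *m a))) -> u = w0.
Proof.
move=> uW u_neg; have ow0 := weyl_orthomx w0L.1.
have [s0 s0D Es0] := weyl_wprod_simple w0L.1.
have [su suD Esu] := weyl_wprod_simple uW.
have w0u : w0^T *m u = 1%:M.
  rewrite -Es0 -Esu trmx_wprod -wprod_cat; apply: wprod_simple_eq1.
    by move=> x; rewrite mem_cat mem_rev => /orP[/s0D | /suD].
  move=> j; rewrite wprod_cat -trmx_wprod Es0 Esu -mulmxA -[u *m _]opprK mulmxN.
  apply: longest_trmx_neg; split; last exact: u_neg (simple_pos j).
  by rewrite rootN ?weyl_root ?simple_root.
by rewrite -[u]mul1mx -(orthomx_mul_tr ow0) -mulmxA w0u mulmx1.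
Qed.

End Longest.

Section Nu.
Variable u : 'M[R]_n.
Hypothesis uW : in_weyl Pi u.
Local Notation nu := (nu Pi Delta u).

Lemma nu_pos_image k g : nu k g -> pos g /\ exists2 a, pos a & g = u *m a.
Proof. by case: k => [|k] [gpos [a aA Eg]]; split => //; exists a => //; case: aA. Qed.

Lemma nu0_exists w0 : longest Pi Delta w0 -> u <> w0 -> exists g, nu 0 g.
Proof.
move=> w0L u_neq; apply: NNPP => none; apply/u_neq/(neg_eq_longest w0L uW).
move=> a [aP apos]; have uaP := weyl_root uW aP.
case: (root_sign uaP) => // uapos; case: none.
by exists (u *m a); split; [|exists a].
Qed.

Lemma nu_succ k g c (i : 'I_(size Delta)) : nu k g -> g = lc c -> (0 < c i)%N ->
  nncomb Delta (u *m Delta`_i) -> nu k.+1 (u *m Delta`_i).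
Proof.
move=> gk Eg ci upos; split; first by split; rewrite ?weyl_root ?simple_root.
exists Delta`_i => //; split; first exact: simple_pos.
by exists g; rewrite // /rle Eg; apply: nncomb_sub_nth.
Qed.

Lemma support_trmx_pos g c : pos (u^T *m g) -> g = lc c ->
  exists2 i, (0 < c i)%N & nncomb Delta (u^T *m Delta`_i).
Proof.
move=> [tgP tgpos] Eg; apply: NNPP => none; apply: (root_not_pos_neg tgP tgpos).
rewrite Eg mulmx_sumr -sumrN.
apply: big_ind => [||i _]; [exact: nncomb0 | exact: nncombD |].
have [->|ci] := posnP (c i); first by rewrite scale0r mulmx0 oppr0; apply: nncomb0.
rewrite -scalemxAr -scalerN; apply: nncombZ.
have tiP := weyl_trmx_root uW (simple_root i).
by case: (root_sign tiP) => // ipos; case: none; exists i.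
Qed.

End Nu.

End RootSystem.

Lemma ex_transition (P : nat -> Prop) K : P 0 -> ~ P K -> exists k, P k /\ ~ P k.+1.
Proof.
move=> P0; elim: K => [|K IH] notPK; first by [].
by have [PK|notPK'] := classic (P K); [exists K | apply: IH].
Qed.

Unset Implicit Arguments.

Theorem lemma4 (R : realFieldType) (n : nat) (Pi Delta : seq 'cV[R]_n)
  (hPi : root_system Pi) (hDelta : simple_system Pi Delta)
  (w0 : 'M[R]_n) (hw0 : longest Pi Delta w0)
  (u : 'M[R]_n) (hu : in_weyl Pi u) (hrat : rational Pi Delta u) (hne : u <> w0) :
  exists2 alpha, alpha \in Delta &
    pos_root Pi Delta (invmx u *m alpha) /\ neg_root Pi Delta (u *m alpha).
Proof.
have ou := weyl_orthomx hPi hu.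
have [k [[g gk] no_next]] : exists k, (exists g, nu Pi Delta u k g) /\
                                      ~ exists g, nu Pi Delta u k.+1 g.
  have [K noK] := hrat.
  apply: ex_transition (nu0_exists hPi hDelta hu hw0 hne) _ => -[g].
  exact: noK.
have [[gP [c Eg]] [a apos Ega]] := nu_pos_image gk.
have [i ci ipos] : exists2 i, (0 < c i)%N & nncomb Delta (u^T *m Delta`_i).
  apply: (support_trmx_pos hPi hDelta hu) Eg.
  by rewrite Ega mulmxA ou mul1mx.
have iP := simple_root hDelta i.
exists Delta`_i; first exact: mem_nth.
rewrite orthomx_invmx //; split; first by split; rewrite ?weyl_trmx_root.
split; first by rewrite weyl_root.
case: (root_sign hDelta (weyl_root hPi hu iP)) => // upos.
by case: no_next; exists (u *m Delta`_i); apply: nu_succ gk Eg ci upos.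
Qed.
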